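(* Let $(X,\|\cdot,\cdot\|)$ be a $2$-normed space, $E\subseteq X$, and $f:E\to X$. If $f$ is statistically ward continuous on $E$, then $f$ is statistically sequentially continuous on $E$; that is, for every $x_0\in E$ and every sequence $(x_k)$ of points of $E$ statistically converging to $x_0$, the sequence $(f(x_k))$ statistically converges to $f(x_0)$.
   Context: A $2$-normed space is a real linear space $X$ with $\dim X>1$ together with a function $\|\cdot,\cdot\|:X^2\to\mathbb{R}$ such that for all $x,y,z\in X$, $\alpha\in\mathbb{R}$: (1) $\|x,y\|=0$ iff $x,y$ are linearly dependent; (2) $\|x,y\|=\|y,x\|$; (3) $\|\alpha x,y\|=|\alpha|\|x,y\|$; (4) $\|x,y+z\|\le\|x,y\|+\|x,z\|$. A sequence $(x_k)$ in $X$ statistically converges to $L\in X$ if for every $\epsilon>0$ and every $z\in X$, $\lim_{n\to\infty}\frac1n|\{k\le n:\|x_k-L,z\|\ge\epsilon\}|=0$. For a sequence $(x_k)$ write $\Delta x_k=x_{k+1}-x_k$. A sequence $(x_k)$ in $X$ is statistically quasi-Cauchy if for every $\epsilon>0$ and every $z\in X$, $\lim_{n\to\infty}\frac1n|\{k\le n:\|\Delta x_k,z\|\ge\epsilon\}|=0$. A function $f:E\to X$ is statistically ward continuous on $E$ if $(f(x_k))$ is statistically quasi-Cauchy whenever $(x_k)$ is a statistically quasi-Cauchy sequence of points of $E$. *)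

From Stdlib Require Import Reals Lra Lia.
Open Scope R_scope.

Record RVecSpace := {
  vs_car :> Type;
  vs_zero : vs_car;
  vs_add : vs_car -> vs_car -> vs_car;
  vs_opp : vs_car -> vs_car;
  vs_scal : R -> vs_car -> vs_car;
  vs_addA : forall x y z, vs_add x (vs_add y z) = vs_add (vs_add x y) z;
  vs_addC : forall x y, vs_add x y = vs_add y x;
  vs_add0 : forall x, vs_add x vs_zero = x;
  vs_addN : forall x, vs_add x (vs_opp x) = vs_zero;
  vs_scalA : forall a b x, vs_scal a (vs_scal b x) = vs_scal (a * b) x;
  vs_scal1 : forall x, vs_scal 1 x = x;
  vs_scalDr : forall a x y, vs_scal a (vs_add x y) = vs_add (vs_scal a x) (vs_scal a y);
  vs_scalDl : forall a b x, vs_scal (a + b) x = vs_add (vs_scal a x) (vs_scal b x)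
}.

Arguments vs_zero {_}.
Arguments vs_add {_} _ _.
Arguments vs_opp {_} _.
Arguments vs_scal {_} _ _.

Definition vs_sub {X : RVecSpace} (x y : X) : X := vs_add x (vs_opp y).

Definition lin_dep {X : RVecSpace} (x y : X) : Prop :=
  exists a b : R, (a <> 0 \/ b <> 0) /\ vs_add (vs_scal a x) (vs_scal b y) = vs_zero.

Record TwoNormedSpace := {
  tn_vs :> RVecSpace;
  tn_norm : tn_vs -> tn_vs -> R;
  tn_dim : exists x y : tn_vs, ~ lin_dep x y;
  tn_zero : forall x y, tn_norm x y = 0 <-> lin_dep x y;
  tn_sym : forall x y, tn_norm x y = tn_norm y x;
  tn_hom : forall (a : R) x y, tn_norm (vs_scal a x) y = Rabs a * tn_norm x y;
  tn_tri : forall x y z, tn_norm x (vs_add y z) <= tn_norm x y + tn_norm x z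
}.

Arguments tn_norm {_} _ _.

Fixpoint count_ge (eps : R) (a : nat -> R) (n : nat) : nat :=
  match n with
  | O => O
  | S m => (if Rle_dec eps (a m) then 1 else 0) + count_ge eps a m
  end.

Definition density_zero_ge (eps : R) (a : nat -> R) : Prop :=
  Un_cv (fun n => INR (count_ge eps a n) / INR n) 0.

Definition stat_conv {X : TwoNormedSpace} (x : nat -> X) (L : X) : Prop :=
  forall (eps : R) (z : X), eps > 0 ->
    density_zero_ge eps (fun k => tn_norm (vs_sub (x k) L) z).

Definition delta {X : TwoNormedSpace} (x : nat -> X) (k : nat) : X :=
  vs_sub (x (S k)) (x k).

Definition stat_quasi_cauchy {X : TwoNormedSpace} (x : nat -> X) : Prop :=
  forall (eps : R) (z : X), eps > 0 ->
    density_zero_ge eps (fun k => tn_norm (delta x k) z).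

(* f defined on E (f given on all of X, only values on E matter) *)
Definition stat_ward_continuous {X : TwoNormedSpace} (E : X -> Prop) (f : X -> X) : Prop :=
  forall x : nat -> X, (forall k, E (x k)) -> stat_quasi_cauchy x ->
    stat_quasi_cauchy (fun k => f (x k)).

Definition stat_seq_continuous {X : TwoNormedSpace} (E : X -> Prop) (f : X -> X) : Prop :=
  forall (x0 : X) (x : nat -> X), E x0 -> (forall k, E (x k)) -> stat_conv x x0 ->
    stat_conv (fun k => f (x k)) (f x0).

(* Given x_k -> x0 statistically, insert x0 between the terms:
   y = (x_0, x0, x_1, x0, x_2, ...).  The differences of y are, up to sign,
   x_k - x0 (even places) and x_{k+1} - x0 (odd places), so y is statistically
   quasi-Cauchy.  Ward continuity makes f(y) statistically quasi-Cauchy, and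
   the even-place differences of f(y) are, up to sign, f(x_k) - f(x0); hence
   f(x_k) -> f(x0) statistically. *)

From Stdlib Require Import Reals Lra Lia.
Open Scope R_scope.

Section VectorAlgebra.
Variable X : RVecSpace.

Lemma scal0 (x : X) : vs_scal 0 x = vs_zero.
Proof.
  assert (Hdouble : vs_scal 0 x = vs_add (vs_scal 0 x) (vs_scal 0 x)).
  { rewrite <- vs_scalDl. f_equal. ring. }
  rewrite <- (vs_addN _ (vs_scal 0 x)).
  rewrite Hdouble at 2. rewrite <- vs_addA, vs_addN, vs_add0. reflexivity.
Qed.

Lemma opp_scal (x : X) : vs_opp x = vs_scal (-1) x.
Proof.
  assert (Hinv : vs_add x (vs_scal (-1) x) = vs_zero).
  { rewrite <- (vs_scal1 _ x) at 1. rewrite <- vs_scalDl.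
    replace (1 + -1) with 0 by ring. apply scal0. }
  rewrite <- (vs_add0 _ (vs_opp x)), <- Hinv.
  rewrite vs_addA, (vs_addC _ (vs_opp x) x), vs_addN, vs_addC, vs_add0.
  reflexivity.
Qed.

Lemma sub_swap (a b : X) : vs_sub b a = vs_scal (-1) (vs_sub a b).
Proof.
  unfold vs_sub. rewrite vs_scalDr, (opp_scal b), vs_scalA.
  replace (-1 * -1) with 1 by ring. rewrite vs_scal1, <- opp_scal.
  apply vs_addC.
Qed.
End VectorAlgebra.

Lemma norm_sub_swap (X : TwoNormedSpace) (a b z : X) :
  tn_norm (vs_sub b a) z = tn_norm (vs_sub a b) z.
Proof.
  rewrite sub_swap, tn_hom, Rabs_left by lra. ring.
Qed.

Section Counting.
Variable eps : R.

Lemma count_ge_succ_le (a : nat -> R) (n : nat) :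
  (count_ge eps a (S n) <= count_ge eps a n + 1)%nat.
Proof. simpl. destruct (Rle_dec eps (a n)); lia. Qed.

Lemma count_ge_mono (a : nat -> R) (n m : nat) :
  (n <= m)%nat -> (count_ge eps a n <= count_ge eps a m)%nat.
Proof. induction 1; simpl; lia. Qed.

Lemma count_ge_interleave (a b c : nat -> R) :
  (forall k, b (2 * k)%nat = a k) -> (forall k, b (S (2 * k)) = c k) ->
  forall n, count_ge eps b (2 * n) = (count_ge eps a n + count_ge eps c n)%nat.
Proof.
  intros Heven Hodd n. induction n as [|n IH]; [reflexivity|].
  replace (2 * S n)%nat with (S (S (2 * n))) by lia.
  change (count_ge eps b (S (S (2 * n)))) with
    ((if Rle_dec eps (b (S (2 * n))) then 1 else 0) +
     ((if Rle_dec eps (b (2 * n)%nat) then 1 else 0) + count_ge eps b (2 * n)))%nat.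
  rewrite Heven, Hodd, IH. simpl. lia.
Qed.

Lemma count_ge_shift (a : nat -> R) (n : nat) :
  count_ge eps a (S n) =
  ((if Rle_dec eps (a O) then 1 else 0) + count_ge eps (fun k => a (S k)) n)%nat.
Proof.
  induction n as [|n IH]; [simpl; lia|].
  change (count_ge eps a (S (S n)))
    with ((if Rle_dec eps (a (S n)) then 1 else 0) + count_ge eps a (S n))%nat.
  rewrite IH. simpl. lia.
Qed.
End Counting.

Lemma Un_cv_squeeze0 (u v : nat -> R) :
  (forall n, 0 <= u n <= v n) -> Un_cv v 0 -> Un_cv u 0.
Proof.
  intros Hbound Hv e He. destruct (Hv e He) as [N HN]. exists N. intros n Hn.
  specialize (HN n Hn). specialize (Hbound n). unfold R_dist in *.
  rewrite Rminus_0_r in *. rewrite Rabs_pos_eq in * by lra. lra.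
Qed.

Lemma Un_cv_const (c : R) : Un_cv (fun _ => c) c.
Proof.
  intros e He. exists O. intros n _. unfold R_dist. rewrite Rminus_diag, Rabs_R0.
  exact He.
Qed.

Lemma Un_cv_inv_INR : Un_cv (fun n => / INR n) 0.
Proof.
  apply cv_infty_cv_0. intros M. destruct (INR_unbounded M) as [N HN].
  exists N. intros n Hn. apply le_INR in Hn. lra.
Qed.

Lemma Un_cv_double (v : nat -> R) (l : R) :
  Un_cv v l -> Un_cv (fun n => v (2 * n)%nat) l.
Proof.
  intros Hv e He. destruct (Hv e He) as [N HN]. exists N. intros n Hn.
  apply HN. lia.
Qed.

Section Density.
Variable eps : R.

Definition ratio (a : nat -> R) (n : nat) : R := INR (count_ge eps a n) / INR n.

Lemma ratio_nonneg (a : nat -> R) (n : nat) : 0 <= ratio a n.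
Proof.
  unfold ratio, Rdiv. apply Rmult_le_pos; [apply pos_INR|].
  destruct n; [simpl INR; rewrite Rinv_0; lra|].
  left. apply Rinv_0_lt_compat, lt_0_INR. lia.
Qed.

Lemma ratio_le (a : nat -> R) (p q n : nat) :
  (count_ge eps a n <= p + q)%nat ->
  ratio a n <= INR p / INR n + INR q / INR n.
Proof.
  intros Hle. unfold ratio. rewrite <- Rdiv_plus_distr, <- plus_INR.
  unfold Rdiv. apply Rmult_le_compat_r; [|apply le_INR; exact Hle].
  destruct n; [simpl INR; rewrite Rinv_0; lra|].
  left. apply Rinv_0_lt_compat, lt_0_INR. lia.
Qed.

Lemma density_zero_interleave (a b c : nat -> R) :
  (forall k, b (2 * k)%nat = a k) -> (forall k, b (S (2 * k)) = c k) ->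
  density_zero_ge eps a -> density_zero_ge eps c -> density_zero_ge eps b.
Proof.
  intros Heven Hodd Ha Hc.
  apply (Un_cv_squeeze0 _ (fun n => ratio a n + ratio c n)).
  - intros n. split; [apply ratio_nonneg|]. apply ratio_le.
    rewrite <- (count_ge_interleave eps a b c Heven Hodd).
    apply count_ge_mono. lia.
  - replace 0 with (0 + 0) by ring. apply CV_plus; assumption.
Qed.

Lemma density_zero_evens (a b : nat -> R) :
  (forall k, b (2 * k)%nat = a k) ->
  density_zero_ge eps b -> density_zero_ge eps a.
Proof.
  intros Heven Hb.
  apply (Un_cv_squeeze0 _ (fun n => 2 * ratio b (2 * n))).
  - intros n. split; [apply ratio_nonneg|].
    assert (Hcount : (count_ge eps a n <= count_ge eps b (2 * n))%nat).
    { rewrite (count_ge_interleave eps a b (fun k => b (S (2 * k))) Heven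
                 (fun k => eq_refl)). lia. }
    destruct n as [|n]; [unfold ratio; simpl; lra|].
    apply le_INR in Hcount.
    assert (Hpos : 0 < INR (S n)) by (apply lt_0_INR; lia).
    unfold ratio. rewrite mult_INR. simpl (INR 2).
    replace (2 * (INR (count_ge eps b (2 * S n)) / ((1 + 1) * INR (S n))))
      with (INR (count_ge eps b (2 * S n)) / INR (S n)) by (field; lra).
    unfold Rdiv. apply Rmult_le_compat_r; [left; apply Rinv_0_lt_compat|]; lra.
  - replace 0 with (2 * 0) by ring.
    apply CV_mult; [apply Un_cv_const|apply (Un_cv_double (ratio b)); exact Hb].
Qed.

Lemma density_zero_shift (a : nat -> R) :
  density_zero_ge eps a -> density_zero_ge eps (fun k => a (S k)).
Proof.
  intros Ha.
  apply (Un_cv_squeeze0 _ (fun n => ratio a n + / INR n)).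
  - intros n. split; [apply ratio_nonneg|].
    replace (/ INR n) with (INR 1 / INR n) by (simpl; unfold Rdiv; ring).
    apply ratio_le.
    pose proof (count_ge_shift eps a n). pose proof (count_ge_succ_le eps a n).
    lia.
  - replace 0 with (0 + 0) by ring. apply CV_plus; [exact Ha|apply Un_cv_inv_INR].
Qed.
End Density.

Section Interleaving.
Variable X : TwoNormedSpace.

Definition interleave_const {A : Type} (u : nat -> A) (a : A) (k : nat) : A :=
  if Nat.even k then u (Nat.div2 k) else a.

Lemma interleave_const_even {A : Type} (u : nat -> A) (a : A) (k : nat) :
  interleave_const u a (2 * k) = u k.
Proof. unfold interleave_const. rewrite Nat.even_even, Nat.div2_double. reflexivity. Qed.

Lemma interleave_const_odd {A : Type} (u : nat -> A) (a : A) (k : nat) :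
  interleave_const u a (S (2 * k)) = a.
Proof.
  unfold interleave_const. replace (S (2 * k)) with (2 * k + 1)%nat by lia.
  rewrite Nat.even_odd. reflexivity.
Qed.

(* If x -> x0 statistically, then (x 0, x0, x 1, x0, ...) is statistically
   quasi-Cauchy: its differences are x0 - x k and x (k+1) - x0. *)
Lemma stat_quasi_cauchy_of_stat_conv (x y : nat -> X) (x0 : X) :
  (forall k, y (2 * k)%nat = x k) -> (forall k, y (S (2 * k)) = x0) ->
  stat_conv x x0 -> stat_quasi_cauchy y.
Proof.
  intros Heven Hodd Hconv eps z Heps.
  apply (density_zero_interleave eps (fun k => tn_norm (vs_sub (x k) x0) z) _
           (fun k => tn_norm (vs_sub (x (S k)) x0) z)).
  - intros k. unfold delta. rewrite Hodd, Heven. apply norm_sub_swap.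
  - intros k. unfold delta. replace (S (S (2 * k))) with (2 * S k)%nat by lia.
    rewrite Heven, Hodd. reflexivity.
  - exact (Hconv eps z Heps).
  - apply (density_zero_shift eps (fun k => tn_norm (vs_sub (x k) x0) z)).
    exact (Hconv eps z Heps).
Qed.

(* Conversely, if (w 0, w0, w 1, w0, ...) is statistically quasi-Cauchy, then
   w -> w0 statistically: the even-place differences are w0 - w k. *)
Lemma stat_conv_of_stat_quasi_cauchy (w y : nat -> X) (w0 : X) :
  (forall k, y (2 * k)%nat = w k) -> (forall k, y (S (2 * k)) = w0) ->
  stat_quasi_cauchy y -> stat_conv w w0.
Proof.
  intros Heven Hodd Hqc eps z Heps.
  apply (density_zero_evens eps _ (fun k => tn_norm (delta y k) z)).
  - intros k. unfold delta. rewrite Hodd, Heven. apply norm_sub_swap.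
  - exact (Hqc eps z Heps).
Qed.
End Interleaving.

Theorem theorem3p3 (X : TwoNormedSpace) (E : X -> Prop) (f : X -> X) :
  stat_ward_continuous E f -> stat_seq_continuous E f.
Proof.
  intros Hward x0 x Hx0 Hx Hconv.
  set (y := interleave_const x x0).
  assert (Hy_in_E : forall k, E (y k)).
  { intros k. unfold y, interleave_const. destruct (Nat.even k); auto. }
  assert (Hy_qc : stat_quasi_cauchy y).
  { apply (stat_quasi_cauchy_of_stat_conv X x y x0); try assumption.
    - apply interleave_const_even.
    - apply interleave_const_odd. }
  apply (stat_conv_of_stat_quasi_cauchy X _ (fun k => f (y k))).
  - intros k. unfold y. rewrite interleave_const_even. reflexivity.
  - intros k. unfold y. rewrite interleave_const_odd. reflexivity.
  - exact (Hward y Hy_in_E Hy_qc).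
Qed.
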